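(* Let $h:[0,\infty)\to[\frac{\beta u_0-1}{r},\frac{\beta u_0}{r}]$ be a decreasing solution to the HJB equation with $h'(0)=0$, and let $z_f\in(0,d]$, $z_g\in[d,\infty)$ be such that $h=\bar f$ on $[0,z_f]$ for some function $\bar f(z)=\frac{\beta u_0}{r}+A_2e^{\theta_1(u_0)z}+B_2e^{-\theta_2(u_0)z}$ and $h=\bar g$ on $(z_g,\infty)$ for some function $\bar g(z)=\frac{\beta u_0-1}{r}+a_2e^{\theta_1(u_0)z}+b_2e^{-\theta_2(u_0)z}$ (as provided by the structure result for such solutions). Then $$\bar f(z)=\frac{\beta u_0}{r}+A_2\Big(e^{\theta_1(u_0)z}+\frac{\theta_1(u_0)}{\theta_2(u_0)}e^{-\theta_2(u_0)z}\Big)\ (z\in[0,z_f]),\qquad \bar g(z)=\frac{\beta u_0-1}{r}+b_2e^{-\theta_2(u_0)z}\ (z>z_g).$$ In particular $\lim_{z\to\infty}h(z)=\frac{\beta u_0-1}{r}$.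
   Context: Fix $\mu\in\mathbb R$, $\sigma>0$, $u_0>0$, $r>0$, $\beta>0$, $d>0$. For $u\in[0,u_0]$ let $\theta_1(u)=\frac{\sqrt{(\mu-u)^2+2r\sigma^2}+(\mu-u)}{\sigma^2}$ and $\theta_2(u)=\frac{\sqrt{(\mu-u)^2+2r\sigma^2}-(\mu-u)}{\sigma^2}$. The HJB equation is $$-rh(z)-\mu h'(z)+\tfrac{\sigma^2}{2}h''(z)+\sup_{u\in[0,u_0]}\{(\beta+h'(z))u\}=\mathbf 1_{\{z>d\}}.$$ A solution to the HJB equation is a function $h:[0,\infty)\to[\frac{\beta u_0-1}{r},\frac{\beta u_0}{r}]$ that is continuously differentiable on $[0,\infty)$, twice continuously differentiable on $[0,d]$ and on $(d,\infty)$ respectively (with $h'(0),h''(0)$ the right derivatives and $h''(d)$ the left second derivative), and satisfies the HJB equation for all $z\ge0$. *)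

From Stdlib Require Import Reals Lra.
From Coquelicot Require Import Coquelicot.
Open Scope R_scope.

Definition theta1 (mu sigma r u : R) : R :=
  (sqrt ((mu - u)^2 + 2 * r * sigma^2) + (mu - u)) / sigma^2.
Definition theta2 (mu sigma r u : R) : R :=
  (sqrt ((mu - u)^2 + 2 * r * sigma^2) - (mu - u)) / sigma^2.

Definition rderiv (f : R -> R) (z l : R) : Prop :=
  filterlim (fun t => (f (z + t) - f z) / t) (at_right 0) (locally l).
Definition lderiv (f : R -> R) (z l : R) : Prop :=
  filterlim (fun t => (f (z + t) - f z) / t) (at_left 0) (locally l).

Definition cont_within (D : R -> Prop) (f : R -> R) (z : R) : Prop :=
  filterlim f (within D (locally z)) (locally (f z)).

(* h is a solution of the HJB equation, with h1 = h' (right derivative at 0)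
   and h2 = h'' (right derivative at 0, left second derivative at d). *)
Definition HJB_solution (mu sigma u0 r beta d : R) (h h1 h2 : R -> R) : Prop :=
  (forall z, 0 <= z -> (beta * u0 - 1) / r <= h z <= beta * u0 / r) /\
  rderiv h 0 (h1 0) /\
  (forall z, 0 < z -> is_derive h z (h1 z)) /\
  (forall z, 0 <= z -> cont_within (fun x => 0 <= x) h1 z) /\
  rderiv h1 0 (h2 0) /\
  (forall z, 0 < z < d -> is_derive h1 z (h2 z)) /\
  lderiv h1 d (h2 d) /\
  (forall z, 0 <= z <= d -> cont_within (fun x => 0 <= x <= d) h2 z) /\
  (forall z, d < z -> is_derive h1 z (h2 z)) /\
  (forall z, d < z -> continuous h2 z) /\
  (forall z, 0 <= z ->
     exists S,
       is_lub (fun y => exists u, 0 <= u <= u0 /\ y = (beta + h1 z) * u) S /\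
       - r * h z - mu * h1 z + sigma^2 / 2 * h2 z + S
         = (if Rlt_dec d z then 1 else 0)).

(* Matching the right derivative at 0 of h = f̄ with h'(0) = 0 forces
   A2 θ1 = B2 θ2.  On (z_g, ∞) the solution stays in a band of width 1/r,
   which rules out the exponentially growing mode e^{θ1 z}: hence a2 = 0, and
   h decays to (β u0 - 1)/r at the rate e^{-θ2 z}. *)

From Stdlib Require Import Reals Lra.
From Coquelicot Require Import Coquelicot.
Open Scope R_scope.

Lemma sqrt_sq_add_gt_abs (x c : R) : 0 < c -> Rabs x < sqrt (x ^ 2 + c).
Proof.
  intros Hc. rewrite <- sqrt_Rsqr_abs. apply sqrt_lt_1_alt. split.
  - apply Rle_0_sqr.
  - unfold Rsqr. simpl. lra.
Qed.

Lemma theta1_gt0 (mu sigma r u : R) :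
  0 < sigma -> 0 < r -> 0 < theta1 mu sigma r u.
Proof.
  intros Hs Hr. unfold theta1.
  assert (Hs2 : 0 < sigma ^ 2) by (apply pow_lt; lra).
  assert (Hsq := sqrt_sq_add_gt_abs (mu - u) (2 * r * sigma ^ 2) ltac:(nra)).
  pose proof (Rle_abs (- (mu - u))). rewrite Rabs_Ropp in *.
  apply Rdiv_lt_0_compat; lra.
Qed.

Lemma theta2_gt0 (mu sigma r u : R) :
  0 < sigma -> 0 < r -> 0 < theta2 mu sigma r u.
Proof.
  intros Hs Hr. unfold theta2.
  assert (Hs2 : 0 < sigma ^ 2) by (apply pow_lt; lra).
  assert (Hsq := sqrt_sq_add_gt_abs (mu - u) (2 * r * sigma ^ 2) ltac:(nra)).
  pose proof (Rle_abs (mu - u)).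
  apply Rdiv_lt_0_compat; lra.
Qed.

Lemma is_derive_rderiv (f : R -> R) (z l : R) : is_derive f z l -> rderiv f z l.
Proof.
  intros Hd%is_derive_Reals. apply filterlim_locally. intros eps.
  destruct (Hd eps (cond_pos eps)) as [del Hdel].
  exists del. intros t Ht Htpos. apply Hdel; [lra|].
  unfold ball in Ht; simpl in Ht; unfold AbsRing_ball, abs, minus, plus, opp in Ht;
    simpl in Ht.
  rewrite Ropp_0, Rplus_0_r in Ht. exact Ht.
Qed.

Lemma rderiv_ext_loc (f g : R -> R) (z l e : R) :
  0 < e -> (forall x, z <= x <= z + e -> f x = g x) ->
  rderiv f z l -> rderiv g z l.
Proof.
  intros He Hfg. apply filterlim_ext_loc.
  exists (mkposreal e He). intros t Ht Htpos.
  unfold ball in Ht; simpl in Ht; unfold AbsRing_ball, abs, minus, plus, opp in Ht;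
    simpl in Ht.
  rewrite Ropp_0, Rplus_0_r, Rabs_right in Ht by lra.
  rewrite !Hfg by lra. reflexivity.
Qed.

Lemma rderiv_unique (f : R -> R) (z l l' : R) :
  rderiv f z l -> rderiv f z l' -> l = l'.
Proof.
  apply (@filterlim_locally_unique R R_AbsRing R_NormedModule (at_right 0)).
  apply Proper_StrongProper, at_right_proper_filter.
Qed.

Lemma exp_unbounded (t z0 K : R) : 0 < t -> exists z, z0 < z /\ K < exp (t * z).
Proof.
  intros Ht. exists (Rmax z0 0 + 1 + Rabs K / t). split.
  - pose proof (Rmax_l z0 0).
    assert (0 <= Rabs K / t) by (apply Rdiv_le_0_compat; [apply Rabs_pos | lra]).
    lra.
  - pose proof (exp_ineq1_le (t * (Rmax z0 0 + 1 + Rabs K / t))).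
    replace (t * (Rmax z0 0 + 1 + Rabs K / t))
      with (t * (Rmax z0 0 + 1) + Rabs K) in * by (field; lra).
    pose proof (Rmax_r z0 0). pose proof (Rle_abs K).
    assert (0 < t * (Rmax z0 0 + 1)) by (apply Rmult_lt_0_compat; lra).
    lra.
Qed.

Lemma exp_modes_bounded_growth_coef0 (a b t1 t2 z0 M : R) :
  0 < t1 -> 0 < t2 ->
  (forall z, z0 < z -> Rabs (a * exp (t1 * z) + b * exp (- t2 * z)) <= M) ->
  a = 0.
Proof.
  intros Ht1 Ht2 Hbound.
  destruct (Req_dec a 0) as [Ha | Ha]; [exact Ha | exfalso].
  assert (Hpa := Rabs_pos_lt a Ha).
  destruct (exp_unbounded t1 (Rmax z0 0) ((M + Rabs b) / Rabs a) Ht1)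
    as [z [Hz Hexp]].
  pose proof (Rmax_l z0 0). pose proof (Rmax_r z0 0).
  assert (Hdecay : Rabs (b * exp (- t2 * z)) <= Rabs b).
  { rewrite Rabs_mult, (Rabs_right (exp _)) by (left; apply exp_pos).
    rewrite <- Rmult_1_r. apply Rmult_le_compat_l; [apply Rabs_pos |].
    rewrite <- exp_0. left. apply exp_increasing.
    assert (0 < t2 * z) by (apply Rmult_lt_0_compat; lra). lra. }
  assert (Hgrowth : Rabs a * exp (t1 * z) <= M + Rabs b).
  { rewrite <- (Rabs_right (exp (t1 * z))), <- Rabs_mult by (left; apply exp_pos).
    replace (a * exp (t1 * z))
      with (a * exp (t1 * z) + b * exp (- t2 * z) - b * exp (- t2 * z)) by ring.
    eapply Rle_trans; [apply Rabs_triang |]. rewrite Rabs_Ropp.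
    apply Rplus_le_compat; [apply Hbound; lra | exact Hdecay]. }
  apply (Rmult_lt_compat_l (Rabs a)) in Hexp; [| exact Hpa].
  replace (Rabs a * ((M + Rabs b) / Rabs a)) with (M + Rabs b) in Hexp
    by (field; lra).
  lra.
Qed.

Lemma is_lim_exp_decay (c b t : R) :
  0 < t -> is_lim (fun z => c + b * exp (- t * z)) p_infty c.
Proof.
  intros Ht.
  replace (Finite c) with (Finite (c + b * 0)) by (f_equal; ring).
  apply is_lim_plus'; [apply is_lim_const |].
  change (Finite (b * 0)) with (Rbar_mult b 0).
  apply is_lim_scal_l.
  apply is_lim_comp with m_infty.
  - apply is_lim_exp_m.
  - replace m_infty with (Rbar_mult (- t) p_infty).
    + apply is_lim_scal_l, is_lim_id.
    + rewrite Rbar_mult_comm. simpl.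
      case Rle_dec; [intros Hle; exfalso; clear - Ht Hle; lra | reflexivity].
  - exists 0. intros. discriminate.
Qed.

Theorem lemma2p4 (mu sigma u0 r beta d : R)
  (Hsigma : 0 < sigma) (Hu0 : 0 < u0) (Hr : 0 < r) (Hbeta : 0 < beta) (Hd : 0 < d)
  (h h1 h2 : R -> R)
  (Hsol : HJB_solution mu sigma u0 r beta d h h1 h2)
  (Hdec : forall x y, 0 <= x -> x <= y -> h y <= h x)
  (Hh0 : h1 0 = 0)
  (zf zg A2 B2 a2 b2 : R)
  (Hzf : 0 < zf <= d) (Hzg : d <= zg)
  (Hf : forall z, 0 <= z <= zf ->
     h z = beta * u0 / r + A2 * exp (theta1 mu sigma r u0 * z)
                         + B2 * exp (- theta2 mu sigma r u0 * z))
  (Hg : forall z, zg < z ->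
     h z = (beta * u0 - 1) / r + a2 * exp (theta1 mu sigma r u0 * z)
                               + b2 * exp (- theta2 mu sigma r u0 * z)) :
  (forall z, 0 <= z <= zf ->
     beta * u0 / r + A2 * exp (theta1 mu sigma r u0 * z)
                   + B2 * exp (- theta2 mu sigma r u0 * z)
     = beta * u0 / r + A2 * (exp (theta1 mu sigma r u0 * z)
          + theta1 mu sigma r u0 / theta2 mu sigma r u0
            * exp (- theta2 mu sigma r u0 * z))) /\
  (forall z, zg < z ->
     (beta * u0 - 1) / r + a2 * exp (theta1 mu sigma r u0 * z)
                         + b2 * exp (- theta2 mu sigma r u0 * z)
     = (beta * u0 - 1) / r + b2 * exp (- theta2 mu sigma r u0 * z)) /\
  is_lim h p_infty ((beta * u0 - 1) / r).
Proof.
  pose proof (theta1_gt0 mu sigma r u0 Hsigma Hr) as Ht1.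
  pose proof (theta2_gt0 mu sigma r u0 Hsigma Hr) as Ht2.
  set (t1 := theta1 mu sigma r u0) in *.
  set (t2 := theta2 mu sigma r u0) in *.
  destruct Hsol as [Hrange [Hrd _]]. rewrite Hh0 in Hrd.
  assert (Hslope : A2 * t1 - B2 * t2 = 0).
  { apply (rderiv_unique
      (fun z => beta * u0 / r + A2 * exp (t1 * z) + B2 * exp (- t2 * z)) 0).
    - apply is_derive_rderiv. auto_derive; [exact I |].
      rewrite !Rmult_0_r, exp_0. ring.
    - apply (rderiv_ext_loc h _ 0 0 zf); [lra | | exact Hrd].
      intros x Hx. apply Hf. lra. }
  assert (Ha2 : a2 = 0).
  { apply (exp_modes_bounded_growth_coef0 a2 b2 t1 t2 zg (1 / r) Ht1 Ht2).
    intros z Hz. specialize (Hrange z ltac:(lra)). rewrite Hg in Hrange by exact Hz.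
    assert (beta * u0 / r = (beta * u0 - 1) / r + 1 / r) by (field; lra).
    apply Rabs_le. lra. }
  split; [| split].
  - intros z _. replace B2 with (A2 * t1 / t2) by (field_simplify_eq; lra).
    field. lra.
  - intros z _. rewrite Ha2. ring.
  - apply is_lim_ext_loc with (fun z => (beta * u0 - 1) / r + b2 * exp (- t2 * z)).
    + exists zg. intros z Hz. rewrite Hg, Ha2 by exact Hz. ring.
    + exact (is_lim_exp_decay _ b2 t2 Ht2).
Qed.
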